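(* Let $\{\mathcal N,\gamma,\boldsymbol\ell,\ell^{(2)},\mathbf Y\}$ be null hypersurface data, $z$ a nowhere-zero function and $V$ a vector field on $\mathcal N$, and set $\mathbf w=\gamma(V,\cdot)$. Then $$\mathcal G_{(z,V)}(\mathbf U)=\tfrac1z\mathbf U,\qquad \mathcal G_{(z,V)}(\mathbf F)=z(\mathbf F+\tfrac12d\mathbf w)+\tfrac12dz\wedge(\boldsymbol\ell+\mathbf w),$$ $$\mathcal G_{(z,V)}(\mathbf s)=\mathbf s+\tfrac12\pounds_n\mathbf w+\tfrac{n(z)}{2z}(\boldsymbol\ell+\mathbf w)-\tfrac1{2z}dz,$$ $$\mathcal G_{(z,V)}(\mathbf r)=\mathbf r+\tfrac1{2z}dz+\tfrac{n(z)}{2z}(\boldsymbol\ell+\mathbf w)+\tfrac12\pounds_n\mathbf w-\mathbf U(V,\cdot),\qquad \mathcal G_{(z,V)}(\kappa_n)=\tfrac1z\Big(\kappa_n-\tfrac{n(z)}z\Big).$$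
   Context: Metric hypersurface data $\{\mathcal N,\gamma,\boldsymbol\ell,\ell^{(2)}\}$: $\mathcal N$ smooth manifold, $\gamma$ symmetric $2$-covariant, $\boldsymbol\ell$ a one-form, $\ell^{(2)}$ a function, such that $\boldsymbol{\mathcal A}|_p((W,a),(Z,b))=\gamma(W,Z)+a\boldsymbol\ell(Z)+b\boldsymbol\ell(W)+ab\ell^{(2)}$ is non-degenerate; its inverse $\mathcal A((\boldsymbol\alpha,a),(\boldsymbol\beta,b))=P(\boldsymbol\alpha,\boldsymbol\beta)+a\,n(\boldsymbol\beta)+b\,n(\boldsymbol\alpha)+ab\,n^{(2)}$ defines $P,n,n^{(2)}$. Null means $n^{(2)}=0$ (then $\gamma(n,\cdot)=0$, $\boldsymbol\ell(n)=1$). $\mathbf F=\frac12d\boldsymbol\ell$, $\mathbf s=\mathbf F(n,\cdot)$ (contraction in the first slot), $\mathbf U=\frac12\pounds_n\gamma$. Hypersurface data adds a symmetric $2$-covariant $\mathbf Y$; $\mathbf r=\mathbf Y(n,\cdot)$, $\kappa_n=-\mathbf Y(n,n)$. Gauge transformation $\mathcal G_{(z,V)}$: $\gamma\mapsto\gamma$, $\boldsymbol\ell\mapsto z(\boldsymbol\ell+\gamma(V,\cdot))$, $\ell^{(2)}\mapsto z^2(\ell^{(2)}+2\boldsymbol\ell(V)+\gamma(V,V))$, $\mathbf Y\mapsto z\mathbf Y+\boldsymbol\ell\otimes_sdz+\frac12\pounds_{zV}\gamma$ ($A\otimes_sB=\frac12(A\otimes B+B\otimes A)$); the transform of a derived quantity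 is that quantity computed from the transformed data (in the null case $n\mapsto z^{-1}n$). *)

(* Local (coordinate) formulation: the manifold N is modelled by an open
   subset Uo of R^m = 'rV[R]_m (a chart domain); tensor fields are given by
   their component functions in the coordinate frame d/dx^i. *)
From HB Require Import structures.
From mathcomp Require Import all_boot all_order all_algebra.
From mathcomp Require Import all_classical all_reals all_analysis.
Set Implicit Arguments. Unset Strict Implicit. Unset Printing Implicit Defensive.
Import Order.TTheory GRing.Theory Num.Theory.
Import numFieldNormedType.Exports.
Local Open Scope ring_scope.
Local Open Scope classical_set_scope.

Section HypData.
Variables (R : realType) (m : nat).

Notation pt := 'rV[R]_m.

Definition ecoord (k : 'I_m) : pt := delta_mx 0 k.

Definition pd (k : 'I_m) (f : pt -> R) : pt -> R := fun x => 'D_(ecoord k) f x.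

Fixpoint Ck (Uo : set pt) (k : nat) (f : pt -> R) : Prop :=
  (forall x, Uo x -> {for x, continuous f}) /\
  match k with
  | 0 => True
  | k'.+1 => forall i : 'I_m, (forall x, Uo x -> derivable f x (ecoord i)) /\ Ck Uo k' (pd i f)
  end.

Definition smooth_on (Uo : set pt) (f : pt -> R) : Prop := forall k, Ck Uo k f.

(* ---- tensor calculus in coordinates ----
   one-forms and vector fields: row vectors of components ('rV_m);
   2-covariant tensors: matrices T with T i j = T(d_i, d_j). *)

Definition dfun (f : pt -> R) (x : pt) : 'rV[R]_m := \row_i pd i f x.

Definition vact (X : pt -> 'rV[R]_m) (f : pt -> R) (x : pt) : R :=
  \sum_k X x 0 k * pd k f x.

Definition dform (a : pt -> 'rV[R]_m) (x : pt) : 'M[R]_m :=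
  \matrix_(i, j) (pd i (fun y => a y 0 j) x - pd j (fun y => a y 0 i) x).

Definition wedge (a b : 'rV[R]_m) : 'M[R]_m :=
  \matrix_(i, j) (a 0 i * b 0 j - a 0 j * b 0 i).

Definition symtens (a b : 'rV[R]_m) : 'M[R]_m :=
  2^-1 *: (a^T *m b + b^T *m a).

Definition lie1 (X a : pt -> 'rV[R]_m) (x : pt) : 'rV[R]_m :=
  \row_i \sum_k (X x 0 k * pd k (fun y => a y 0 i) x
                 + a x 0 k * pd i (fun y => X y 0 k) x).

Definition lie2 (X : pt -> 'rV[R]_m) (g : pt -> 'M[R]_m) (x : pt) : 'M[R]_m :=
  \matrix_(i, j) \sum_k (X x 0 k * pd k (fun y => g y i j) x
                         + g x k j * pd i (fun y => X y 0 k) x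
                         + g x i k * pd j (fun y => X y 0 k) x).

(* the matrix of the form A on T_pN x R, in the frame (d_1..d_m, (0,1)) *)
Definition Amat (g : 'M[R]_m) (l : 'rV[R]_m) (l2 : R) : 'M[R]_(m + 1) :=
  block_mx g l^T l l2%:M.

(* components of the inverse: n^i and n^(2) *)
Definition nvec (g : 'M[R]_m) (l : 'rV[R]_m) (l2 : R) : 'rV[R]_m :=
  \row_i (invmx (Amat g l l2)) (lshift 1 i) (rshift m ord0).
Definition n2val (g : 'M[R]_m) (l : 'rV[R]_m) (l2 : R) : R :=
  (invmx (Amat g l l2)) (rshift m ord0) (rshift m ord0).

Definition nfield (g : pt -> 'M[R]_m) (l : pt -> 'rV[R]_m) (l2 : pt -> R) : pt -> 'rV[R]_m :=
  fun x => nvec (g x) (l x) (l2 x).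
Definition n2field (g : pt -> 'M[R]_m) (l : pt -> 'rV[R]_m) (l2 : pt -> R) : pt -> R :=
  fun x => n2val (g x) (l x) (l2 x).

Definition Ften (l : pt -> 'rV[R]_m) (x : pt) : 'M[R]_m := 2^-1 *: dform l x.
Definition sform g l l2 (x : pt) : 'rV[R]_m := nfield g l l2 x *m Ften l x.
Definition Uten g l l2 (x : pt) : 'M[R]_m := 2^-1 *: lie2 (nfield g l l2) g x.
Definition rform g l l2 (Y : pt -> 'M[R]_m) (x : pt) : 'rV[R]_m := nfield g l l2 x *m Y x.
Definition kappan g l l2 (Y : pt -> 'M[R]_m) (x : pt) : R :=
  - (nfield g l l2 x *m Y x *m (nfield g l l2 x)^T) 0 0.

Definition gauge_ell (z : pt -> R) (V : pt -> 'rV[R]_m) (g : pt -> 'M[R]_m)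
  (l : pt -> 'rV[R]_m) : pt -> 'rV[R]_m :=
  fun x => z x *: (l x + V x *m g x).
Definition gauge_ell2 (z : pt -> R) (V : pt -> 'rV[R]_m) (g : pt -> 'M[R]_m)
  (l : pt -> 'rV[R]_m) (l2 : pt -> R) : pt -> R :=
  fun x => z x ^+ 2 * (l2 x + 2 * (l x *m (V x)^T) 0 0 + (V x *m g x *m (V x)^T) 0 0).
Definition gauge_Y (z : pt -> R) (V : pt -> 'rV[R]_m) (g : pt -> 'M[R]_m)
  (l : pt -> 'rV[R]_m) (Y : pt -> 'M[R]_m) : pt -> 'M[R]_m :=
  fun x => z x *: Y x + symtens (l x) (dfun z x)
           + 2^-1 *: lie2 (fun y => z y *: V y) g x.

End HypData.

(* In the frame (d_1, ..., d_m, (0,1)) the gauge transformation acts on the matrix of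
   A by the congruence D^T A D with D = [[1, z V^T], [0, z]], so the new null field is
   n / z.  Each formula is then a pointwise computation driven by gamma(n, .) = 0 and
   ell(n) = 1, which hold on a neighbourhood of the point, together with three
   Leibniz rules for Lie derivatives: Cartan's formula L_n w = i_n dw + d(w(n)) with
   w(n) = 0; L_n (gamma(V, .)) = (L_n gamma)(V, .) + gamma([n, V], .); and, applied
   to gamma(n, .) = 0 along V, (L_V gamma)(n, .) = gamma([n, V], .). *)

From HB Require Import structures.
From mathcomp Require Import all_boot all_order all_algebra.
From mathcomp Require Import all_classical all_reals all_analysis.
From mathcomp Require Import ring.
Set Implicit Arguments. Unset Strict Implicit. Unset Printing Implicit Defensive.
Import Order.TTheory GRing.Theory Num.Theory.
Import numFieldNormedType.Exports.
Local Open Scope ring_scope.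
Local Open Scope classical_set_scope.

Section NullVector.
Variables (R : realType) (m : nat) (g : 'M[R]_m) (l : 'rV[R]_m) (l2 : R).

Lemma invmx_Amat_lastcol :
  invmx (Amat g l l2) *m col_mx 0 1 = col_mx (nvec g l l2)^T (n2val g l l2)%:M.
Proof.
apply/matrixP => i j; rewrite !ord1 mxE big_split_ord /= big1 => [|k _]; last first.
  by rewrite col_mxEu mxE mulr0.
rewrite add0r big_ord1 col_mxEd mxE mulr1.
by case: (split_ordP i) => i' ->; rewrite ?col_mxEu ?col_mxEd !mxE ?(ord1 i') ?eqxx.
Qed.

Lemma Amat_nvec : Amat g l l2 \in unitmx -> n2val g l l2 = 0 ->
  g *m (nvec g l l2)^T = 0 /\ l *m (nvec g l l2)^T = 1.
Proof.
move=> uA n20; have := mulKVmx uA (col_mx 0 1).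
rewrite invmx_Amat_lastcol n20 raddf0 /Amat mul_block_col !mulmx0 !addr0.
by case/eq_col_mx.
Qed.

Lemma nvec_unique (u : 'rV[R]_m) : Amat g l l2 \in unitmx ->
  Amat g l l2 *m col_mx u^T 0 = col_mx 0 1 -> nvec g l l2 = u.
Proof.
move=> uA Au; have := invmx_Amat_lastcol.
rewrite -Au mulKmx // => /esym/eq_col_mx[/(congr1 trmx)].
by rewrite !trmxK.
Qed.

End NullVector.

Section GaugeMatrix.
Variables (R : realType) (m : nat) (g : 'M[R]_m) (l : 'rV[R]_m) (l2 : R).
Variables (c : R) (V : 'rV[R]_m).
Hypothesis g_sym : g^T = g.

Lemma Amat_gauge : let D := block_mx 1%:M (c *: V^T) 0 c%:M in
  D^T *m Amat g l l2 *m D =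
  Amat g (c *: (l + V *m g)) (c ^+ 2 * (l2 + 2 * (l *m V^T) 0 0 + (V *m g *m V^T) 0 0)).
Proof.
rewrite /Amat tr_block_mx !mulmx_block !trmx1 !trmx0 !tr_scalar_mx.
rewrite !mul1mx !mul0mx !mulmx1 !mulmx0 !addr0.
congr block_mx.
- by rewrite -scalemxAr mul_mx_scalar !linearZ /= linearD /= trmx_mul g_sym scalerDr addrC.
- by rewrite linearZ /= trmxK -scalemxAl mul_scalar_mx scalerDr addrC.
rewrite [(c *: V^T)^T]linearZ /= trmxK -scalemxAl mul_scalar_mx -scalerDr.
rewrite -!scalemxAl -!scalemxAr !mulmxDl mul_mx_scalar -!scalar_mxM.
have -> : V *m l^T = (l *m V^T)^T by rewrite trmx_mul trmxK.
move: (l *m V^T) (V *m g *m V^T) => a b.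
rewrite [a]mx11_scalar [b]mx11_scalar tr_scalar_mx.
by apply/matrixP => i j; rewrite !ord1 !mxE eqxx /= !mulr1n; ring.
Qed.

Lemma nvec_gauge : Amat g l l2 \in unitmx -> n2val g l l2 = 0 -> c != 0 ->
  nvec g (c *: (l + V *m g)) (c ^+ 2 * (l2 + 2 * (l *m V^T) 0 0 + (V *m g *m V^T) 0 0))
  = c^-1 *: nvec g l l2.
Proof.
move=> uA n20 c0; have [gn ln] := Amat_nvec uA n20.
apply: nvec_unique.
  rewrite -Amat_gauge !unitmx_mul unitmx_tr uA andbT.
  by rewrite unitmxE det_ublock det1 det_scalar expr1 mul1r unitfE c0.
rewrite /Amat mul_block_col !mulmx0 !addr0 linearZ /= -!scalemxAr gn scaler0.
rewrite -scalemxAl scalerA mulVf // scale1r mulmxDl ln -mulmxA.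
by rewrite gn mulmx0 addr0.
Qed.

End GaugeMatrix.

Section PartialDerivatives.
Variables (R : realType) (m : nat).
Local Notation pt := 'rV[R]_m.
Implicit Types (f h : pt -> R) (x : pt).

Definition pderivable f x := forall k, derivable f x (ecoord R k).

Lemma pderivableD f h x : pderivable f x -> pderivable h x ->
  pderivable (fun y => f y + h y) x.
Proof. by move=> df dh k; apply: derivableD. Qed.

Lemma pderivableM f h x : pderivable f x -> pderivable h x ->
  pderivable (fun y => f y * h y) x.
Proof. by move=> df dh k; apply: derivableM. Qed.

Lemma pderivableV f x : f x != 0 -> pderivable f x -> pderivable (fun y => (f y)^-1) x.
Proof. by move=> f0 df k; apply: derivableV. Qed.

Lemma pderivable_cst (c : R) x : pderivable (fun=> c) x.
Proof. by move=> k; apply: derivable_cst. Qed.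

Lemma pderivable_near f h x : (\forall y \near x, f y = h y) ->
  pderivable f x -> pderivable h x.
Proof. by move=> fh df k; apply: near_eq_derivable (df k). Qed.

Lemma pderivable_sum (I : Type) (r : seq I) (P : pred I) (F : I -> pt -> R) x :
  (forall i, pderivable (F i) x) -> pderivable (fun y => \sum_(i <- r | P i) F i y) x.
Proof.
move=> dF; rewrite -fct_sumE.
by elim/big_ind: _ => [|f h|i _]; [exact: pderivable_cst | exact: pderivableD | exact: dF].
Qed.

Lemma pderivable_prod (I : Type) (r : seq I) (P : pred I) (F : I -> pt -> R) x :
  (forall i, pderivable (F i) x) -> pderivable (fun y => \prod_(i <- r | P i) F i y) x.
Proof.
move=> dF; rewrite -fct_prodE.
by elim/big_ind: _ => [|f h|i _]; [exact: pderivable_cst | exact: pderivableM | exact: dF].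
Qed.

Lemma pdD k f h x : pderivable f x -> pderivable h x ->
  pd k (fun y => f y + h y) x = pd k f x + pd k h x.
Proof. by move=> df dh; apply: deriveD. Qed.

Lemma pdM k f h x : pderivable f x -> pderivable h x ->
  pd k (fun y => f y * h y) x = f x * pd k h x + h x * pd k f x.
Proof. by move=> df dh; rewrite /pd deriveM. Qed.

Lemma pd_cst k (c : R) x : pd k (fun=> c) x = 0.
Proof. exact: derive_cst. Qed.

Lemma pd_near k f h x : (\forall y \near x, f y = h y) -> pd k f x = pd k h x.
Proof. exact: near_eq_derive. Qed.

Lemma pd_sum k n (F : 'I_n -> pt -> R) x : (forall i, pderivable (F i) x) ->
  pd k (fun y => \sum_i F i y) x = \sum_i pd k (F i) x.
Proof. by move=> dF; rewrite -fct_sumE /pd derive_sum // => i; apply: dF. Qed.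

Lemma smooth_pderivable (Uo : set pt) f x : smooth_on Uo f -> Uo x -> pderivable f x.
Proof. by move=> sf Ux k; apply: ((sf 1%N).2 k).1. Qed.

End PartialDerivatives.

Section MatrixFields.
Variables (R : realType) (m : nat).
Local Notation pt := 'rV[R]_m.
Implicit Types (f : pt -> R) (x : pt).

Definition mx_pderivable p q (A : pt -> 'M[R]_(p, q)) x :=
  forall i j, pderivable (fun y => A y i j) x.

Lemma mx_pderivableD p q (A B : pt -> 'M[R]_(p, q)) x :
  mx_pderivable A x -> mx_pderivable B x -> mx_pderivable (fun y => A y + B y) x.
Proof.
by move=> dA dB i j; under eq_fun do rewrite mxE; exact: pderivableD.
Qed.

Lemma mx_pderivable_mul p q r (A : pt -> 'M[R]_(p, q)) (B : pt -> 'M[R]_(q, r)) x :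
  mx_pderivable A x -> mx_pderivable B x -> mx_pderivable (fun y => A y *m B y) x.
Proof.
move=> dA dB i j; under eq_fun do rewrite mxE.
by apply: pderivable_sum => k; apply: pderivableM.
Qed.

Lemma pderivable_det p (A : pt -> 'M[R]_p) x :
  mx_pderivable A x -> pderivable (fun y => \det (A y)) x.
Proof.
move=> dA; apply: pderivable_sum => s; apply: pderivableM; first exact: pderivable_cst.
by apply: pderivable_prod => i; apply: dA.
Qed.

Lemma mx_pderivable_invmx p (A : pt -> 'M[R]_p) x :
  (\forall y \near x, A y \in unitmx) -> mx_pderivable A x ->
  mx_pderivable (fun y => invmx (A y)) x.
Proof.
move=> uA dA i j.
(* Cramer's rule: near x, each entry of the inverse is a cofactor over the determinant. *)
apply: (pderivable_near
  (f := fun y => (\det (A y))^-1 * ((-1) ^+ (j + i) * \det (row' j (col' i (A y)))))).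
  by apply: filterS uA => y uAy; rewrite /invmx uAy mxE /adjugate mxE /cofactor.
apply: pderivableM; last apply: pderivableM.
- apply: pderivableV; last exact: pderivable_det.
  by rewrite -unitfE -unitmxE; apply: nbhs_singleton uA.
- exact: pderivable_cst.
by apply: pderivable_det => a b; under eq_fun do rewrite !mxE; apply: dA.
Qed.

Lemma mx_pderivable_Amat (g : pt -> 'M[R]_m) (l : pt -> 'rV[R]_m) (l2 : pt -> R) x :
  mx_pderivable g x -> mx_pderivable l x -> pderivable l2 x ->
  mx_pderivable (fun y => Amat (g y) (l y) (l2 y)) x.
Proof.
move=> dg dl dl2 i j; rewrite /Amat.
case: (split_ordP i) => i' ->; case: (split_ordP j) => j' ->; rewrite ?ord1.
- by under eq_fun do rewrite block_mxEul; exact: dg.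
- by under eq_fun do rewrite block_mxEur mxE; exact: dl.
- by under eq_fun do rewrite block_mxEdl; exact: dl.
by under eq_fun do rewrite block_mxEdr mxE eqxx mulr1n; exact: dl2.
Qed.

Definition pdmx k p q (A : pt -> 'M[R]_(p, q)) x : 'M[R]_(p, q) :=
  \matrix_(i, j) pd k (fun y => A y i j) x.

Definition jac p (X : pt -> 'rV[R]_p) x : 'M[R]_(m, p) :=
  \matrix_(k, j) pd k (fun y => X y 0 j) x.

Lemma jacD p (X Z : pt -> 'rV[R]_p) x : mx_pderivable X x -> mx_pderivable Z x ->
  jac (fun y => X y + Z y) x = jac X x + jac Z x.
Proof.
move=> dX dZ; apply/matrixP => k j; rewrite !mxE.
by under eq_fun do rewrite mxE; exact: pdD (dX 0 j) (dZ 0 j).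
Qed.

Lemma jacZ p f (X : pt -> 'rV[R]_p) x : pderivable f x -> mx_pderivable X x ->
  jac (fun y => f y *: X y) x = (dfun f x)^T *m X x + f x *: jac X x.
Proof.
move=> df dX; apply/matrixP => k j; rewrite !mxE big_ord1 !mxE.
under eq_fun do rewrite mxE.
by rewrite (pdM _ df (dX 0 j)) addrC (mulrC (X x 0 j)).
Qed.

Lemma jac_mulmx p q (X : pt -> 'rV[R]_p) (A : pt -> 'M[R]_(p, q)) x :
  mx_pderivable X x -> mx_pderivable A x ->
  jac (fun y => X y *m A y) x = jac X x *m A x + \matrix_k (X x *m pdmx k A x).
Proof.
move=> dX dA; apply/matrixP => k j; rewrite !mxE.
under eq_fun do rewrite mxE.
rewrite pd_sum => [|a]; last exact: pderivableM.
by rewrite -big_split; apply: eq_bigr => a _; rewrite pdM // !mxE addrC (mulrC (A x a j)).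
Qed.

Lemma jac_near p (X Z : pt -> 'rV[R]_p) x : (\forall y \near x, X y = Z y) ->
  jac X x = jac Z x.
Proof.
move=> XZ; apply/matrixP => k j; rewrite !mxE.
by apply: pd_near; apply: filterS XZ => y ->.
Qed.

Lemma jac_near0 p (X : pt -> 'rV[R]_p) x : (\forall y \near x, X y = 0) -> jac X x = 0.
Proof.
by move=> X0; rewrite (jac_near X0); apply/matrixP => k j; rewrite !mxE pd_cst.
Qed.

Lemma dfun_near0 f x : (\forall y \near x, f y = 0) -> dfun f x = 0.
Proof. by move=> f0; apply/rowP => k; rewrite !mxE (pd_near _ f0) pd_cst. Qed.

End MatrixFields.

Section LieCalculus.
Variables (R : realType) (m : nat).
Local Notation pt := 'rV[R]_m.
Implicit Types (X V a : pt -> 'rV[R]_m) (g : pt -> 'M[R]_m) (f : pt -> R) (x : pt).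

Definition dirmx (v : 'rV[R]_m) p q (A : pt -> 'M[R]_(p, q)) x : 'M[R]_(p, q) :=
  \sum_k v 0 k *: pdmx k A x.

Definition bracket X V x : 'rV[R]_m := X x *m jac V x - V x *m jac X x.

Lemma vactE X f x : vact X f x = (X x *m (dfun f x)^T) 0 0.
Proof. by rewrite mxE; apply: eq_bigr => k _; rewrite !mxE. Qed.

Lemma dformE a x : dform a x = jac a x - (jac a x)^T.
Proof. by apply/matrixP => i j; rewrite !mxE. Qed.

Lemma wedgeE (u v : 'rV[R]_m) : wedge u v = u^T *m v - v^T *m u.
Proof. by apply/matrixP => i j; rewrite !mxE !big_ord1 !mxE [v _ i * _]mulrC. Qed.

Lemma lie1E X a x : lie1 X a x = X x *m jac a x + a x *m (jac X x)^T.
Proof.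
apply/rowP => i; rewrite !mxE big_split /=.
by congr (_ + _); apply: eq_bigr => k _; rewrite !mxE.
Qed.

Lemma lie2E X g x :
  lie2 X g x = dirmx (X x) g x + jac X x *m g x + g x *m (jac X x)^T.
Proof.
apply/matrixP => i j; rewrite !mxE summxE !big_split /=.
by congr (_ + _ + _); apply: eq_bigr => k _; rewrite !mxE // mulrC.
Qed.

Lemma dirmxZ (c : R) (v : 'rV[R]_m) p q (A : pt -> 'M[R]_(p, q)) x :
  dirmx (c *: v) A x = c *: dirmx v A x.
Proof. by rewrite scaler_sumr; apply: eq_bigr => k _; rewrite mxE scalerA. Qed.

Lemma lie2_near X X' g x : (\forall y \near x, X y = X' y) -> lie2 X g x = lie2 X' g x.
Proof. by move=> XX'; rewrite !lie2E (jac_near XX') (nbhs_singleton XX'). Qed.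

Lemma lie2Z f X g x : pderivable f x -> mx_pderivable X x ->
  lie2 (fun y => f y *: X y) g x = f x *: lie2 X g x
    + (dfun f x)^T *m (X x *m g x) + g x *m (X x)^T *m dfun f x.
Proof.
move=> df dX; rewrite !lie2E (jacZ df dX) dirmxZ.
rewrite raddfD /= linearZ /= trmx_mul trmxK mulmxDl mulmxDr -scalemxAl -scalemxAr.
rewrite !scalerDr !mulmxA.
by apply/matrixP => i j; rewrite !mxE; ring.
Qed.

Lemma lie1_mulmx X V g x : mx_pderivable V x -> mx_pderivable g x ->
  lie1 X (fun y => V y *m g y) x = V x *m lie2 X g x + bracket X V x *m g x.
Proof.
move=> dV dg; rewrite lie1E (jac_mulmx dV dg) lie2E /bracket mulmxDr.
have -> : X x *m \matrix_k (V x *m pdmx k g x) = V x *m dirmx (X x) g x.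
  rewrite mulmx_sum_row /dirmx mulmx_sumr; apply: eq_bigr => k _.
  by rewrite rowK scalemxAr.
rewrite !mulmxDr mulmxBl !mulmxA.
by apply/matrixP => i j; rewrite !mxE; ring.
Qed.

Lemma lie1_near0 X a x : (\forall y \near x, a y = 0) -> lie1 X a x = 0.
Proof.
by move=> a0; rewrite lie1E (jac_near0 a0) (nbhs_singleton a0) mulmx0 mul0mx addr0.
Qed.

Lemma lie1_cartan X a x : mx_pderivable X x -> mx_pderivable a x ->
  lie1 X a x = X x *m dform a x + dfun (fun y => (a y *m (X y)^T) 0 0) x.
Proof.
move=> dX da; apply/rowP => i; rewrite !mxE.
have -> : (fun y => (a y *m (X y)^T) 0 0) = (fun y => \sum_k a y 0 k * X y 0 k).
  by apply/funext => y; rewrite mxE; apply: eq_bigr => k _; rewrite mxE.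
rewrite pd_sum => [|k]; last exact: pderivableM.
rewrite -big_split; apply: eq_bigr => k _; rewrite /= !mxE pdM //.
ring.
Qed.

Lemma dformD a b x : mx_pderivable a x -> mx_pderivable b x ->
  dform (fun y => a y + b y) x = dform a x + dform b x.
Proof.
move=> da db; rewrite !dformE (jacD da db) raddfD /=.
by rewrite opprD addrACA.
Qed.

Lemma dformZ f a x : pderivable f x -> mx_pderivable a x ->
  dform (fun y => f y *: a y) x = f x *: dform a x + wedge (dfun f x) (a x).
Proof.
move=> df da; rewrite !dformE (jacZ df da) wedgeE raddfD /= linearZ /= trmx_mul trmxK.
by rewrite scalerBr opprD addrACA addrC.
Qed.

End LieCalculus.

Section GaugeAtPoint.
Variables (R : realType) (m : nat).
Local Notation pt := 'rV[R]_m.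
Variables (gam : pt -> 'M[R]_m) (ell : pt -> 'rV[R]_m) (ell2 : pt -> R)
  (Y : pt -> 'M[R]_m) (z : pt -> R) (V : pt -> 'rV[R]_m) (x : pt).

Hypothesis null_data : \forall y \near x, [/\ (gam y)^T = gam y,
  Amat (gam y) (ell y) (ell2 y) \in unitmx & n2field gam ell ell2 y = 0].
Hypothesis z_neq0 : \forall y \near x, z y != 0.
Hypotheses (dgam : mx_pderivable gam x) (dell : mx_pderivable ell x).
Hypotheses (dell2 : pderivable ell2 x) (dz : pderivable z x) (dV : mx_pderivable V x).

Local Notation n := (nfield gam ell ell2).
Local Notation w := (fun y => V y *m gam y).
Local Notation ell' := (gauge_ell z V gam ell).
Local Notation ell2' := (gauge_ell2 z V gam ell ell2).
Local Notation Y' := (gauge_Y z V gam ell Y).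
Local Notation n' := (nfield gam ell' ell2').

Lemma gam_n_near : \forall y \near x, gam y *m (n y)^T = 0.
Proof. by apply: filterS null_data => y [_ uA n20]; case: (Amat_nvec uA n20). Qed.

Lemma n_gam_near : \forall y \near x, n y *m gam y = 0.
Proof.
apply: filterS2 null_data gam_n_near => y [gs _ _] gn.
by rewrite -gs -[n y]trmxK -trmx_mul gn trmx0.
Qed.

Lemma ell_n : ell x *m (n x)^T = 1.
Proof.
by have [_ uA n20] := nbhs_singleton null_data; case: (Amat_nvec uA n20).
Qed.

Lemma n'_near : \forall y \near x, n' y = (z y)^-1 *: n y.
Proof.
apply: filterS2 null_data z_neq0 => y [gs uA n20] zy.
exact: nvec_gauge.
Qed.

Lemma dn : mx_pderivable n x.
Proof.
move=> i k; rewrite ord1.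
have -> : (fun y => n y 0 k) =
    fun y => invmx (Amat (gam y) (ell y) (ell2 y)) (lshift 1 k) (rshift m ord0).
  by apply/funext => y; rewrite mxE.
apply: (mx_pderivable_invmx (A := fun y => Amat (gam y) (ell y) (ell2 y))).
  by apply: filterS null_data => y [].
exact: mx_pderivable_Amat.
Qed.

Lemma Uten_gauge : Uten gam ell' ell2' x = (z x)^-1 *: Uten gam ell ell2 x.
Proof.
have dzV : pderivable (fun y => (z y)^-1) x.
  exact: pderivableV (nbhs_singleton z_neq0) dz.
rewrite /Uten (lie2_near _ n'_near) (lie2Z _ dzV dn).
rewrite (nbhs_singleton n_gam_near) (nbhs_singleton gam_n_near) mulmx0 mul0mx !addr0.
by rewrite !scalerA mulrC.
Qed.

Lemma Ften_gauge : Ften ell' x = z x *: (Ften ell x + 2^-1 *: dform w x)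
  + 2^-1 *: wedge (dfun z x) (ell x + w x).
Proof.
have dw : mx_pderivable w x := mx_pderivable_mul dV dgam.
rewrite /Ften /gauge_ell (dformZ dz (mx_pderivableD dell dw)) (dformD dell dw).
by rewrite -scalerDr [LHS]scalerDr !scalerA mulrC.
Qed.

Lemma n_dform_w : n x *m dform w x = lie1 n w x.
Proof.
have dw : mx_pderivable w x := mx_pderivable_mul dV dgam.
rewrite (lie1_cartan dn dw) (@dfun_near0 _ _ _ x) ?addr0 //.
by apply: filterS gam_n_near => y gn; rewrite -mulmxA gn mulmx0 mxE.
Qed.

Lemma n_wedge : n x *m wedge (dfun z x) (ell x + w x)
  = vact n z x *: (ell x + w x) - dfun z x.
Proof.
have nb : n x *m (ell x + w x)^T = 1.
  rewrite -[LHS]trmxK trmx_mul trmxK mulmxDl ell_n -mulmxA.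
  by rewrite (nbhs_singleton gam_n_near) mulmx0 addr0 trmx1.
rewrite wedgeE mulmxBr !mulmxA nb mul1mx [n x *m _]mx11_scalar -vactE.
by rewrite mul_scalar_mx.
Qed.

Lemma sform_gauge : sform gam ell' ell2' x = sform gam ell ell2 x + 2^-1 *: lie1 n w x
  + (vact n z x / (2 * z x)) *: (ell x + w x) - (2 * z x)^-1 *: dfun z x.
Proof.
have zx := nbhs_singleton z_neq0.
rewrite /sform Ften_gauge (nbhs_singleton n'_near); move: (Ften ell x) => F.
rewrite -scalemxAl mulmxDr -!scalemxAr mulmxDr -scalemxAr n_dform_w n_wedge.
move: (n x *m F) (lie1 n w x) (ell x + w x) (dfun z x) => s L b dzx.
by apply/rowP => j; rewrite !mxE; field.
Qed.

Lemma n_dfunT f : n x *m (dfun f x)^T = (vact n f x)%:M.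
Proof. by rewrite [LHS]mx11_scalar vactE. Qed.

Lemma n_lie2V : n x *m lie2 V gam x = bracket n V x *m gam x.
Proof.
have := lie1_mulmx V dn dgam; rewrite (lie1_near0 _ n_gam_near).
move/eqP; rewrite eq_sym addr_eq0 => /eqP ->.
by rewrite /bracket -mulNmx opprB.
Qed.

Lemma n_lie2zV : n x *m lie2 (fun y => z y *: V y) gam x
  = z x *: (bracket n V x *m gam x) + vact n z x *: w x.
Proof.
rewrite (lie2Z _ dz dV) !mulmxDr -scalemxAr n_lie2V !mulmxA n_dfunT mul_scalar_mx.
by rewrite (nbhs_singleton n_gam_near) !mul0mx addr0 -scalemxAl.
Qed.

Lemma n_symtens : n x *m symtens (ell x) (dfun z x)
  = 2^-1 *: (dfun z x + vact n z x *: ell x).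
Proof.
have n_ell : n x *m (ell x)^T = 1 by rewrite -[LHS]trmxK trmx_mul trmxK ell_n trmx1.
by rewrite /symtens -scalemxAr mulmxDr !mulmxA n_ell mul1mx n_dfunT mul_scalar_mx.
Qed.

Lemma rform_gauge_bracket : rform gam ell' ell2' Y' x = rform gam ell ell2 Y x
  + (2 * z x)^-1 *: dfun z x + (vact n z x / (2 * z x)) *: (ell x + w x)
  + 2^-1 *: (bracket n V x *m gam x).
Proof.
have zx := nbhs_singleton z_neq0.
rewrite /rform /gauge_Y (nbhs_singleton n'_near) -scalemxAl !mulmxDr n_symtens.
rewrite -!scalemxAr n_lie2zV.
move: (n x *m Y x) (bracket n V x *m gam x) (ell x) (w x) (dfun z x) => r B l wx dzx.
by apply/rowP => j; rewrite !mxE; field.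
Qed.

Lemma rform_gauge : rform gam ell' ell2' Y' x = rform gam ell ell2 Y x
  + (2 * z x)^-1 *: dfun z x + (vact n z x / (2 * z x)) *: (ell x + w x)
  + 2^-1 *: lie1 n w x - V x *m Uten gam ell ell2 x.
Proof.
rewrite rform_gauge_bracket (lie1_mulmx _ dV dgam) /Uten -scalemxAr.
rewrite [2^-1 *: (_ + _)]scalerDr [2^-1 *: (V x *m _) + _]addrC.
by rewrite [in RHS]addrA addrK.
Qed.

Lemma kappan_gauge :
  kappan gam ell' ell2' Y' x = (z x)^-1 * (kappan gam ell ell2 Y x - vact n z x / z x).
Proof.
have zx := nbhs_singleton z_neq0.
have gn := nbhs_singleton gam_n_near.
have dz_n : dfun z x *m (n x)^T = (vact n z x)%:M.
  by rewrite -[LHS]trmxK trmx_mul trmxK n_dfunT tr_scalar_mx.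
have b_n : (ell x + w x) *m (n x)^T = 1 by rewrite mulmxDl ell_n -mulmxA gn mulmx0 addr0.
change (kappan gam ell' ell2' Y' x) with (- (rform gam ell' ell2' Y' x *m (n' x)^T) 0 0).
rewrite rform_gauge_bracket (nbhs_singleton n'_near); move: (bracket n V x) => B.
rewrite linearZ /= -scalemxAr !mulmxDl -!scalemxAl dz_n b_n -[B *m _ *m _]mulmxA gn.
rewrite mulmx0 scaler0 addr0 /kappan.
move: (n x *m Y x *m (n x)^T) => r; rewrite !mxE eqxx /= !mulr1n.
by field.
Qed.

End GaugeAtPoint.

Theorem lemma3p6 (R : realType) (m : nat) (Uo : set 'rV[R]_m)
  (gam : 'rV[R]_m -> 'M[R]_m) (ell : 'rV[R]_m -> 'rV[R]_m) (ell2 : 'rV[R]_m -> R)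
  (Y : 'rV[R]_m -> 'M[R]_m) (z : 'rV[R]_m -> R) (V : 'rV[R]_m -> 'rV[R]_m) :
  open Uo ->
  (forall i j, smooth_on Uo (fun x => gam x i j)) ->
  (forall i, smooth_on Uo (fun x => ell x 0 i)) ->
  smooth_on Uo ell2 ->
  (forall i j, smooth_on Uo (fun x => Y x i j)) ->
  smooth_on Uo z ->
  (forall i, smooth_on Uo (fun x => V x 0 i)) ->
  (forall x, Uo x -> (gam x)^T = gam x) ->
  (forall x, Uo x -> (Y x)^T = Y x) ->
  (forall x, Uo x -> Amat (gam x) (ell x) (ell2 x) \in unitmx) ->
  (forall x, Uo x -> n2field gam ell ell2 x = 0) ->
  (forall x, Uo x -> z x != 0) ->
  let w := fun x => V x *m gam x in
  let n := nfield gam ell ell2 in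
  let ell' := gauge_ell z V gam ell in
  let ell2' := gauge_ell2 z V gam ell ell2 in
  let Y' := gauge_Y z V gam ell Y in
  forall x, Uo x ->
    [/\ Uten gam ell' ell2' x = (z x)^-1 *: Uten gam ell ell2 x,
        Ften ell' x = z x *: (Ften ell x + 2^-1 *: dform w x)
                      + 2^-1 *: wedge (dfun z x) (ell x + w x),
        sform gam ell' ell2' x = sform gam ell ell2 x + 2^-1 *: lie1 n w x
                      + (vact n z x / (2 * z x)) *: (ell x + w x)
                      - (2 * z x)^-1 *: dfun z x,
        rform gam ell' ell2' Y' x = rform gam ell ell2 Y x + (2 * z x)^-1 *: dfun z x
                      + (vact n z x / (2 * z x)) *: (ell x + w x)
                      + 2^-1 *: lie1 n w x - V x *m Uten gam ell ell2 x
      & kappan gam ell' ell2' Y' x = (z x)^-1 * (kappan gam ell ell2 Y x - vact n z x / z x)].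
Proof.
(* Y is never differentiated and only its contraction with n matters. *)
move=> oU sgam sell sell2 _ sz sV gam_sym _ Amat_unit null z_neq0 /= x Ux.
have U_near : \forall y \near x, Uo y by apply: open_nbhs_nbhs.
have null_data : \forall y \near x, [/\ (gam y)^T = gam y,
    Amat (gam y) (ell y) (ell2 y) \in unitmx & n2field gam ell ell2 y = 0].
  by apply: filterS U_near => y Uy; split; [apply: gam_sym | apply: Amat_unit | apply: null].
have z_near : \forall y \near x, z y != 0 by apply: filterS U_near.
have dgam : mx_pderivable gam x by move=> i j; apply: smooth_pderivable.
have dell : mx_pderivable ell x by move=> i j; rewrite ord1; apply: smooth_pderivable.
have dV : mx_pderivable V x by move=> i j; rewrite ord1; apply: smooth_pderivable.
have dell2 := smooth_pderivable sell2 Ux.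
have dz := smooth_pderivable sz Ux.
split.
- exact: (Uten_gauge V null_data z_near dgam dell dell2 dz).
- exact: (Ften_gauge dgam dell dz dV).
- exact: (sform_gauge null_data z_near dgam dell dell2 dz dV).
- exact: (rform_gauge Y null_data z_near dgam dell dell2 dz dV).
exact: (kappan_gauge Y null_data z_near dgam dell dell2 dz dV).
Qed.
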